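(* Every simple partially ordered abelian group of rank one $(G,G^+)$ is order-isomorphic to the direct limit of a directed system $(G_n,f_{n,n+1})_{n\ge 1}$ in which, for every $n\in\mathbb{N}$, $G_n=(\mathbb{Z},G_n^+)$ is a simple component and $f_{n,n+1}\colon G_n\to G_{n+1}$ is an order-embedding.
   Context: A partially ordered abelian group $(G,G^+)$ is an abelian group $G$ with a submonoid $G^+$ (containing $0$) such that $G^+\cap(-G^+)=\{0\}$; write $x\le_G y$ iff $y-x\in G^+$. An order-unit is $0\neq u\in G^+$ such that for every $x\in G$ there is $n\in\mathbb{N}$ with $-nu\le_G x\le_G nu$. $(G,G^+)$ is simple if $G\neq 0$ and every nonzero element of $G^+$ is an order-unit. $G$ has rank one if it is isomorphic (as an abelian group) to a nonzero subgroup of $\mathbb{Q}$. A simple component is a simple partially ordered abelian group of the form $(\mathbb{Z},P)$. A positive morphism $f\colon G\to H$ is a group homomorphism with $f(G^+)\subseteq H^+$; it is an order-embedding if it is injective and $f(G^+)=f(G)\cap H^+$. The direct limit of a directed system of partially ordered abelian groups with positive connecting maps is the group-theoretic direct limit with positive cone the union of the images of the positive cones. *)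

From HB Require Import structures.
From mathcomp Require Import all_boot all_order all_algebra.
Set Implicit Arguments. Unset Strict Implicit. Unset Printing Implicit Defensive.
Import Order.TTheory GRing.Theory Num.Theory.
Local Open Scope ring_scope.

Definition pog_cone (G : zmodType) (P : G -> Prop) : Prop :=
  [/\ P 0, (forall x y, P x -> P y -> P (x + y)) &
      (forall x, P x -> P (- x) -> x = 0)].

Definition pog_le (G : zmodType) (P : G -> Prop) (x y : G) : Prop := P (y - x).

Definition order_unit (G : zmodType) (P : G -> Prop) (u : G) : Prop :=
  [/\ u <> 0, P u &
      forall x : G, exists n : nat, pog_le P (- (u *+ n)) x /\ pog_le P x (u *+ n)].

Definition simple_pog (G : zmodType) (P : G -> Prop) : Prop :=
  [/\ pog_cone P, (exists x : G, x <> 0) &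
      (forall u, P u -> u <> 0 -> order_unit P u)].

(* rank one: isomorphic (as abelian group) to a nonzero subgroup of Q,
   i.e. G is nonzero and embeds (injective additive map) into Q. *)
Definition rank_one (G : zmodType) : Prop :=
  (exists x : G, x <> 0) /\
  exists phi : G -> rat,
    (forall x y, phi (x + y) = phi x + phi y) /\ injective phi.

Definition positive_morphism (G H : zmodType) (PG : G -> Prop) (PH : H -> Prop)
  (f : G -> H) : Prop :=
  (forall x y, f (x + y) = f x + f y) /\ (forall x, PG x -> PH (f x)).

(* order-embedding: injective positive morphism with f(G^+) = f(G) \cap H^+ *)
Definition order_embedding (G H : zmodType) (PG : G -> Prop) (PH : H -> Prop)
  (f : G -> H) : Prop :=
  [/\ positive_morphism PG PH f, injective f &
      forall x, PH (f x) -> exists x', PG x' /\ f x' = f x].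

(* Directed system indexed by nat: objects (int, P n), connecting maps
   f n : G_n -> G_{n+1}.  fcomp f n k = f_{n, n+k}. *)
Fixpoint fcomp (f : nat -> int -> int) (n k : nat) (x : int) : int :=
  match k with
  | 0 => x
  | k'.+1 => f (n + k')%N (fcomp f n k' x)
  end.

(* Group-theoretic direct limit, realized as the setoid of pairs (n, x)
   with x in G_n, modulo (n,x) ~ (m,y) iff f_{n,k} x = f_{m,k} y for some k. *)
Definition dl_eq (f : nat -> int -> int) (a b : nat * int) : Prop :=
  exists k : nat, [/\ (a.1 <= k)%N, (b.1 <= k)%N &
    fcomp f a.1 (k - a.1) a.2 = fcomp f b.1 (k - b.1) b.2].

Definition dl_add (f : nat -> int -> int) (a b : nat * int) : nat * int :=
  let k := maxn a.1 b.1 in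
  (k, fcomp f a.1 (k - a.1) a.2 + fcomp f b.1 (k - b.1) b.2).

Definition dl_pos (P : nat -> int -> Prop) (f : nat -> int -> int) (a : nat * int)
  : Prop :=
  exists (m : nat) (y : int), P m y /\ dl_eq f (m, y) a.

Definition dl_order_iso (G : zmodType) (PG : G -> Prop)
  (P : nat -> int -> Prop) (f : nat -> int -> int) (h : G -> nat * int) : Prop :=
  [/\ (forall x y, dl_eq f (h (x + y)) (dl_add f (h x) (h y))),
      (forall x y, dl_eq f (h x) (h y) -> x = y),
      (forall z, exists x, dl_eq f (h x) z) &
      (forall x, PG x <-> dl_pos P f (h x))].

(* A rank-one group G is torsion-free, countable and locally cyclic: two
   elements x, y satisfy a relation m x = n y, and a Bezout combination of x
   and y then generates both.  Absorbing an enumeration of G one element at a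
   time yields generators g_0, g_1, ... with g_n = c_n g_(n+1) whose cyclic
   subgroups exhaust G.  Identifying <g_n> with Z via k |-> k g_n and pulling
   back the positive cone gives simple components, multiplication by c_n is
   the inclusion <g_n> <= <g_(n+1)>, hence an order-embedding, and the limit
   of this increasing union is G itself. *)

From HB Require Import structures.
From mathcomp Require Import all_boot all_order all_algebra.
From Stdlib Require Import ClassicalEpsilon.
Import GRing.Theory Num.Theory.
Set Implicit Arguments.
Unset Strict Implicit.

Local Open Scope ring_scope.

Section Pullback.
Variables (H G : zmodType) (Gp : G -> Prop) (f : {additive H -> G}).

Lemma simple_pog_comp : injective f -> (exists x : H, x <> 0) ->
  simple_pog Gp -> simple_pog (fun x => Gp (f x)).
Proof.
move=> f_inj H_neq0 [[Gp0 GpD Gp_anti] _ Gp_unit]; split=> //.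
- split=> [|x y|x]; first by rewrite (raddf0 f).
    by rewrite (raddfD f); apply: GpD.
  by rewrite (raddfN f) => fx fNx; apply: f_inj; rewrite (raddf0 f); exact: Gp_anti.
- move=> u fu u_neq0.
  have fu_neq0 : f u <> 0 by move=> /eqP; rewrite raddf_eq0 // => /eqP.
  have [_ _ bound] := Gp_unit _ fu fu_neq0.
  split=> // x; have [n [lo hi]] := bound (f x).
  by exists n; rewrite /pog_le !(raddfB f) (raddfN f) (raddfMn f).
Qed.

End Pullback.

Lemma order_embedding_of_reflect (G H : zmodType) (PG : G -> Prop) (PH : H -> Prop)
    (f : G -> H) :
  {morph f : x y / x + y} -> injective f -> (forall x, PH (f x) <-> PG x) ->
  order_embedding PG PH f.
Proof.
move=> fD f_inj fP; split=> //; first by split=> // x /fP.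
by move=> x /fP Px; exists x.
Qed.

Lemma dl_order_iso_of_section (G : zmodType) (PG : G -> Prop)
    (P : nat -> int -> Prop) (f : nat -> int -> int)
    (val : nat * int -> G) (h : G -> nat * int) :
  (forall a b, dl_eq f a b <-> val a = val b) ->
  (forall a b, val (dl_add f a b) = val a + val b) ->
  (forall a, dl_pos P f a <-> PG (val a)) ->
  cancel h val -> dl_order_iso PG P f h.
Proof.
move=> dl_eqE valD dl_posE hK; split.
- by move=> x y; apply/dl_eqE; rewrite valD !hK.
- by move=> x y /dl_eqE; rewrite !hK.
- by move=> z; exists (val z); apply/dl_eqE; rewrite hK.
- by move=> x; split=> [Px|/dl_posE]; rewrite ?hK //; apply/dl_posE; rewrite hK.
Qed.

Definition torsion_free (G : zmodType) :=
  forall (x : G) (k : int), k != 0 -> x *~ k = 0 -> x = 0.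

Definition locally_cyclic (G : zmodType) :=
  forall x y : G, exists z (m n : int), x = z *~ m /\ y = z *~ n.

Section TorsionFree.
Variables (G : zmodType) (tfG : torsion_free G).

Lemma torsion_free_mulrzI (u : G) : u != 0 -> injective ( *~%R u).
Proof.
move=> u_neq0 a b eq_ab; apply/eqP; rewrite -subr_eq0; apply: contraNT u_neq0.
by move=> ab_neq0; apply/eqP/(tfG ab_neq0); rewrite mulrzBr eq_ab subrr.
Qed.

Lemma torsion_free_mulIrz (k : int) : k != 0 -> injective ( *~%R^~ k : G -> G).
Proof.
move=> k_neq0 x y eq_xy; apply/eqP; rewrite -subr_eq0; apply/eqP.
by apply: (tfG k_neq0); rewrite mulrzBl eq_xy subrr.
Qed.

(* With a Bezout relation u m + v n = gcd m n, the combination z := u y + v x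
   generates both x and y. *)
Lemma torsion_free_common_generator (x y : G) (m n : int) :
  x *~ m = y *~ n -> gcdz m n != 0 ->
  exists z, x = z *~ (n %/ gcdz m n)%Z /\ y = z *~ (m %/ gcdz m n)%Z.
Proof.
move=> eq_xy d_neq0; have [u [v uv_gcd]] := Bezoutz m n.
exists (y *~ u + x *~ v); split; apply: (torsion_free_mulIrz d_neq0) => /=.
- rewrite -mulrzA divzK ?dvdz_gcdr // -uv_gcd mulrzDr mulrzDl.
  by rewrite -!mulrzA !(mulrC u) !mulrzA eq_xy.
- rewrite -mulrzA divzK ?dvdz_gcdl // -uv_gcd mulrzDr mulrzDl.
  by rewrite -!mulrzA !(mulrC v) !mulrzA eq_xy addrC.
Qed.

End TorsionFree.

Lemma rank_one_additive (G : zmodType) :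
  rank_one G -> exists phi : {additive G -> rat}, injective phi.
Proof.
move=> [_ [phi [phiD phi_inj]]].
have phiB : {morph phi : x y / x - y}.
  by move=> x y; apply: (addIr (phi y)); rewrite -phiD !subrK.
by exists (HB.pack_for {additive G -> rat} phi
  (GRing.isZmodMorphism.Build _ _ phi phiB)).
Qed.

Section RankOne.
Variables (G : zmodType) (phi : {additive G -> rat}) (phi_inj : injective phi).

Lemma rank_one_torsion_free : torsion_free G.
Proof.
move=> x k k_neq0 /(congr1 phi); rewrite raddfMz raddf0 => /eqP.
by rewrite mulrz_eq0 (negPf k_neq0) raddf_eq0 // => /eqP.
Qed.

Lemma rank_one_dependent (x : G) : x != 0 -> forall y : G,
  exists m n : int, n != 0 /\ x *~ m = y *~ n.
Proof.
move=> x_neq0 y; set a := phi x; set b := phi y.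
have a_neq0 : a != 0 by rewrite raddf_eq0.
exists (numq b * denq a), (numq a * denq b); split.
  by rewrite mulf_neq0 ?denq_neq0 ?numq_eq0.
apply: phi_inj; rewrite !raddfMz -/a -/b -[a *~ _]mulrzr -[b *~ _]mulrzr !intrM.
by rewrite mulrCA -numqE mulrC [b * _]mulrCA -numqE.
Qed.

Lemma rank_one_locally_cyclic : locally_cyclic G.
Proof.
move=> x y; have [->|x_neq0] := eqVneq x 0.
  by exists y, 0, 1; rewrite mulr0z mulr1z.
have [m [n [n_neq0 eq_xy]]] := rank_one_dependent x_neq0 y.
have d_neq0 : gcdz m n != 0 by rewrite gcdz_eq0 negb_and n_neq0 orbT.
have [z [-> ->]] := torsion_free_common_generator rank_one_torsion_free eq_xy d_neq0.
by exists z, (n %/ gcdz m n)%Z, (m %/ gcdz m n)%Z.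
Qed.

End RankOne.

Lemma countable_inj_enum (T : Type) (U : countType) (phi : T -> U) (t0 : T) :
  injective phi -> exists e : nat -> T, forall x, exists n, e n = x.
Proof.
move=> phi_inj.
pose e n := epsilon (inhabits t0) (fun x => pickle (phi x) = n).
exists e => x; exists (pickle (phi x)); apply/phi_inj/(pcan_inj pickleK).
exact: (epsilon_spec (inhabits t0) (fun y => pickle (phi y) = _) (ex_intro _ x erefl)).
Qed.

(* g n.+1 generates a cyclic group containing both g n and e n. *)
Lemma locally_cyclic_chain (G : zmodType) (x0 : G) (e : nat -> G) :
  locally_cyclic G -> (forall x, exists n, e n = x) ->
  exists (g : nat -> G) (c : nat -> int),
    [/\ g 0%N = x0, forall n, g n = g n.+1 *~ c n &
        forall x, exists n k, x = g n *~ k].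
Proof.
move=> lcG e_surj.
have lcP x y : exists p : G * int * int, (x == p.1.1 *~ p.1.2) && (y == p.1.1 *~ p.2).
  by have [z [m [n [-> ->]]]] := lcG x y; exists (z, m, n); rewrite !eqxx.
pose next x y := xchoose (lcP x y).
pose fix g n := if n is n'.+1 then (next (g n') (e n')).1.1 else x0.
exists g, (fun n => (next (g n) (e n)).1.2); split=> // [n|x].
  by have /andP[/eqP] := xchooseP (lcP (g n) (e n)).
have [n <-] := e_surj x; exists n.+1, (next (g n) (e n)).2.
by have /andP[_ /eqP] := xchooseP (lcP (g n) (e n)).
Qed.

Section CyclicChainLimit.
Variables (G : zmodType) (Gp : G -> Prop) (g : nat -> G) (c : nat -> int).
Hypotheses (tfG : torsion_free G) (g0_neq0 : g 0%N != 0)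
  (gS : forall n, g n = g n.+1 *~ c n) (g_cover : forall x, exists n k, x = g n *~ k).

Definition chain_cone n (k : int) := Gp (g n *~ k).
Definition chain_map n (k : int) := k * c n.
Definition chain_val (a : nat * int) := g a.1 *~ a.2.

Lemma chain_neq0 n : g n != 0.
Proof.
elim: n => // n; apply: contraNneq => gSn0.
by rewrite gS gSn0 mul0rz.
Qed.

Lemma chain_mulrz_fcomp n k x :
  g (n + k)%N *~ fcomp chain_map n k x = g n *~ x.
Proof.
elim: k => [|k IHk] /=; first by rewrite addn0.
by rewrite addnS /chain_map mulrzA mulrzAC -gS.
Qed.

Lemma chain_val_shift a k : (a.1 <= k)%N ->
  g k *~ fcomp chain_map a.1 (k - a.1) a.2 = chain_val a.
Proof.
by case: a => n x /= le_nk; rewrite -{1}(subnKC le_nk); exact: chain_mulrz_fcomp.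
Qed.

Lemma dl_eq_chainE a b : dl_eq chain_map a b <-> chain_val a = chain_val b.
Proof.
split=> [[k [le_ak le_bk eq_ab]]|eq_ab].
  by rewrite -(chain_val_shift le_ak) -(chain_val_shift le_bk) eq_ab.
exists (maxn a.1 b.1); rewrite leq_maxl leq_maxr; split=> //.
apply: (torsion_free_mulrzI tfG (chain_neq0 (maxn a.1 b.1))) => /=.
by rewrite !chain_val_shift ?leq_maxl ?leq_maxr.
Qed.

Lemma chain_val_dl_add a b :
  chain_val (dl_add chain_map a b) = chain_val a + chain_val b.
Proof.
by rewrite {1}/chain_val mulrzDr !chain_val_shift ?leq_maxl ?leq_maxr.
Qed.

Lemma dl_pos_chainE a : dl_pos chain_cone chain_map a <-> Gp (chain_val a).
Proof.
split=> [[m [y [Py /dl_eq_chainE <-]]] // | Pa].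
by exists a.1, a.2; split=> //; apply/dl_eq_chainE.
Qed.

Lemma chain_cone_simple n : simple_pog Gp -> simple_pog (chain_cone n).
Proof.
apply: (simple_pog_comp (f := *~%R (g n))); last by exists 1.
exact: torsion_free_mulrzI (chain_neq0 n).
Qed.

Lemma chain_map_order_embedding n :
  order_embedding (chain_cone n) (chain_cone n.+1) (chain_map n).
Proof.
apply: order_embedding_of_reflect => [x y|x y|x]; rewrite /chain_map.
- exact: mulrDl.
- have cn_neq0 : c n != 0 by apply: contraNneq (chain_neq0 n); rewrite gS => ->.
  exact: mulIf.
- by rewrite /chain_cone mulrzA mulrzAC -gS.
Qed.

Lemma chain_dl_order_iso : exists h, dl_order_iso Gp chain_cone chain_map h.
Proof.
have coverP x : exists a, chain_val a == x.
  by have [n [k ->]] := g_cover x; exists (n, k).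
exists (fun x => xchoose (coverP x)).
apply: dl_order_iso_of_section dl_eq_chainE chain_val_dl_add dl_pos_chainE _.
by move=> x; apply/eqP/(xchooseP (coverP x)).
Qed.

End CyclicChainLimit.

Theorem proposition1p1 (G : zmodType) (Gp : G -> Prop) :
  simple_pog Gp -> rank_one G ->
  exists (P : nat -> int -> Prop) (f : nat -> int -> int),
    [/\ (forall n, simple_pog (P n)),
        (forall n, order_embedding (P n) (P n.+1) (f n)) &
        exists h : G -> nat * int, dl_order_iso Gp P f h].
Proof.
move=> Gp_simple G_rank1; have [[x0 x0_neq0] _] := G_rank1.
have [phi phi_inj] := rank_one_additive G_rank1.
have [e e_surj] := countable_inj_enum x0 phi_inj.
have [g [c [g0 gS g_cover]]] :=
  locally_cyclic_chain x0 (rank_one_locally_cyclic phi_inj) e_surj.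
have tfG := rank_one_torsion_free phi_inj.
have g0_neq0 : g 0%N != 0 by rewrite g0; apply/eqP.
exists (chain_cone Gp g), (chain_map c); split.
- by move=> n; apply: chain_cone_simple.
- by move=> n; apply: chain_map_order_embedding.
- exact: chain_dl_order_iso.
Qed.
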